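(* Let $C=\{(c_1,\dots,c_e)\in\mathbb{R}^e: c_1\ge-(c_2+\dots+c_e),\ c_i\ge0\ \text{for } 2\le i\le e\}$ and let $f\in\mathbb{K}[[\underline{x}]][y]$ be monic of degree $n\ge1$. Then $f$ is irreducible in $\mathbb{K}_C[[\underline{x}]][y]$ if and only if $F(X_1,\dots,X_e,y)=f(X_1,X_2X_1,\dots,X_eX_1,y)$ is irreducible in $\mathbb{K}[[\underline{X}]][y]$.
   Context: $\mathbb{K}$ is an algebraically closed field of characteristic $0$, $\underline{x}=(x_1,\dots,x_e)$, $\underline{X}=(X_1,\dots,X_e)$. $C$ is a line free cone, and $\mathbb{K}_C[[\underline{x}]]$ denotes the ring of formal series $\sum_{p\in C\cap\mathbb{Z}^e}a_p\underline{x}^p$; it contains $\mathbb{K}[[\underline{x}]]$. Irreducibility of a monic polynomial of degree $n$ in $A[y]$ means it is not a product of two monic polynomials of $A[y]$ of $y$-degrees strictly between $0$ and $n$. *)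

From HB Require Import structures.
From mathcomp Require Import all_boot all_order all_algebra.
From mathcomp Require Import boolp classical_sets cardinality fsbigop.
Set Implicit Arguments. Unset Strict Implicit. Unset Printing Implicit Defensive.
Import Order.TTheory GRing.Theory Num.Theory.
Local Open Scope ring_scope.
Local Open Scope classical_set_scope.

(* Exponent vectors in Z^e are row vectors 'rV[int]_e; the paper's x_1
   corresponds to the index i : 'I_e with val i = 0. *)
Notation exps e := 'rV[int]_e.

Definition series (K : comNzRingType) (e : nat) := exps e -> K.

Definition szero (K : comNzRingType) e : series K e := fun _ => 0.
Definition sone (K : comNzRingType) e : series K e :=
  fun p => if p == 0 then 1 else 0.

(* Cauchy product of series: (ab)_p = sum_{q} a_q b_{p-q}, a finitely
   supported sum (finite whenever a, b are supported in a line free cone). *)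
Definition smul (K : comNzRingType) e (a b : series K e) : series K e :=
  fun p => \sum_(q \in [set: exps e]) a q * b (p - q).

(* Support of a series contained in a set S of exponents: the series lies in
   K_S[[x]] := { sum_{p in S} a_p x^p }. *)
Definition supp_in (K : comNzRingType) e (S : set (exps e)) (a : series K e) :=
  forall p, a p != 0 -> S p.

Definition ypoly (K : comNzRingType) e := nat -> series K e.

Definition coeffs_in (K : comNzRingType) e (S : set (exps e)) (P : ypoly K e) :=
  forall k, supp_in S (P k).

Definition monic_deg (K : comNzRingType) e (P : ypoly K e) (d : nat) :=
  P d = @sone K e /\ forall k, (d < k)%N -> P k = @szero K e.

Definition ymul (K : comNzRingType) e (P Q : ypoly K e) : ypoly K e :=
  fun k p => \sum_(i < k.+1) smul (P i) (Q (k - i)%N) p.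

(* The positive orthant N^e: support set of K[[x]]. *)
Definition orthant (e : nat) : set (exps e) :=
  [set p | forall i : 'I_e, 0 <= p 0 i].

Definition coneC (e : nat) : set (exps e) :=
  [set p | (forall i : 'I_e, val i != 0%N -> 0 <= p 0 i) /\
           (forall i : 'I_e, val i = 0%N ->
              - (\sum_(j : 'I_e | val j != 0%N) p 0 j) <= p 0 i)].

Definition irreducible_over (K : comNzRingType) e (S : set (exps e))
    (f : ypoly K e) (n : nat) :=
  ~ exists (g h : ypoly K e) (d : nat),
      [/\ (0 < d < n)%N, coeffs_in S g /\ coeffs_in S h,
          monic_deg g d, monic_deg h (n - d)%N & ymul g h = f].

(* Substitution x_1 = X_1, x_i = X_i X_1 (i >= 2): the monomial x^p becomes
   X_1^(p_1+...+p_e) X_2^p_2 ... X_e^p_e, so the coefficient of X^P in the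
   result is the coefficient of x^(psi P) in f, where
   psi P = (P_1 - (P_2+...+P_e), P_2, ..., P_e). *)
Definition subst_exp e (P : exps e) : exps e :=
  \row_(i < e) (if val i == 0%N then P 0 i - \sum_(j : 'I_e | val j != 0%N) P 0 j
                else P 0 i).

Definition subst_first (K : comNzRingType) e (f : ypoly K e) : ypoly K e :=
  fun k P => f k (subst_exp P).

Arguments orthant e : clear implicits.
Arguments coneC e : clear implicits.

(** The substitution x_1 = X_1, x_i = X_i X_1 (i >= 2) acts on exponents
    through the group automorphism
    [psi P = (P_1 - (P_2 + ... + P_e), P_2, ..., P_e)] of Z^e, which maps
    N^e bijectively onto the lattice points of C.  Precomposing coefficient
    functions with psi is therefore a ring isomorphism K_C[[x]] ~ K[[X]]
    (the Cauchy product is reindexed along psi) that sends f to F and monic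
    polynomials of y-degree d to monic polynomials of y-degree d, so monic
    factorizations of f over K_C[[x]] and of F over K[[X]] correspond. *)
From HB Require Import structures.
From mathcomp Require Import all_boot all_order all_algebra.
From mathcomp Require Import boolp classical_sets cardinality fsbigop.
From mathcomp Require Import ring.
Set Implicit Arguments.
Unset Strict Implicit.
Unset Printing Implicit Defensive.
Local Open Scope ring_scope.
Import GRing.Theory Num.Theory.

Section ExponentChange.
Variables (K : comNzRingType) (e : nat).
Variables (T Ti : exps e -> exps e).
Hypotheses (TK : cancel T Ti) (TiK : cancel Ti T).
Hypothesis TB : GRing.zmod_morphism T.

Definition ypoly_comp (P : ypoly K e) : ypoly K e := fun k p => P k (T p).

Definition monic_factorization (S : set (exps e)) (f : ypoly K e) n g h d :=
  [/\ (0 < d < n)%N, coeffs_in S g /\ coeffs_in S h,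
      monic_deg g d, monic_deg h (n - d)%N & ymul g h = f].

Lemma zmod_morphism_can2 : GRing.zmod_morphism Ti.
Proof. by move=> p q; apply: (can_inj TK); rewrite TB !TiK. Qed.

Lemma eq0_comp p : (T p == 0) = (p == 0).
Proof.
have T0 : T 0 = 0 by have := TB 0 0; rewrite !subrr.
by rewrite -{1}T0 (inj_eq (can_inj TK)).
Qed.

Lemma smul_comp (a b : series K e) p :
  smul (a \o T) (b \o T) p = smul a b (T p).
Proof.
rewrite /smul (reindex_fsbigT T (fun q => a q * b (T p - q))); last first.
  by exists Ti.
by apply: eq_fsbigr => q _ /=; rewrite TB.
Qed.

Lemma ymul_comp g h :
  ymul (ypoly_comp g) (ypoly_comp h) = ypoly_comp (ymul g h).
Proof.
apply/funext => k; apply/funext => p.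
by apply: eq_bigr => i _; exact: smul_comp.
Qed.

Lemma monic_deg_comp P d : monic_deg P d -> monic_deg (ypoly_comp P) d.
Proof.
move=> [Pd Pgt]; split => [|k /Pgt Pk]; apply/funext => p; rewrite /ypoly_comp.
  by rewrite Pd /sone eq0_comp.
by rewrite Pk.
Qed.

Lemma coeffs_in_comp (S S' : set (exps e)) P :
  (forall p, S (T p) -> S' p) -> coeffs_in S P -> coeffs_in S' (ypoly_comp P).
Proof. by move=> SS' SP k p /SP; apply: SS'. Qed.

Lemma monic_factorization_comp (S S' : set (exps e)) f n g h d :
  (forall p, S (T p) -> S' p) -> monic_factorization S f n g h d ->
  monic_factorization S' (ypoly_comp f) n (ypoly_comp g) (ypoly_comp h) d.
Proof.
move=> SS' [dn [Sg Sh] mg mh <-]; split; rewrite ?ymul_comp //.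
- by split; apply: coeffs_in_comp SS' _.
- exact: monic_deg_comp.
- exact: monic_deg_comp.
Qed.

End ExponentChange.

Lemma irreducible_over_comp (K : comNzRingType) e (T Ti : exps e -> exps e)
    (S S' : set (exps e)) (f : ypoly K e) n :
  cancel T Ti -> cancel Ti T -> GRing.zmod_morphism T ->
  (forall p, S' p <-> S (T p)) ->
  irreducible_over S f n <-> irreducible_over S' (ypoly_comp T f) n.
Proof.
move=> TK TiK TB SS'; split=> irr [g [h [d fact]]]; apply: irr.
- exists (ypoly_comp Ti g), (ypoly_comp Ti h), d.
  have -> : f = ypoly_comp Ti (ypoly_comp T f).
    by apply/funext => k; apply/funext => p; rewrite /ypoly_comp TiK.
  apply: monic_factorization_comp fact => //; first exact: zmod_morphism_can2.
  by move=> p /SS'; rewrite TiK.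
- exists (ypoly_comp T g), (ypoly_comp T h), d.
  by apply: monic_factorization_comp fact => // p /SS'.
Qed.

Section Substitution.
Variable e : nat.

Definition tail_sum (P : exps e) : int := \sum_(j : 'I_e | val j != 0%N) P 0 j.

Definition unsubst_exp (P : exps e) : exps e :=
  \row_(i < e) (if val i == 0%N then P 0 i + tail_sum P else P 0 i).

Lemma tail_sum_subst P : tail_sum (subst_exp P) = tail_sum P.
Proof. by apply: eq_bigr => j /negbTE j0; rewrite mxE j0. Qed.

Lemma tail_sum_unsubst P : tail_sum (unsubst_exp P) = tail_sum P.
Proof. by apply: eq_bigr => j /negbTE j0; rewrite mxE j0. Qed.

Lemma subst_expK : cancel (@subst_exp e) unsubst_exp.
Proof.
move=> P; apply/rowP => i; rewrite !mxE -/(tail_sum P) tail_sum_subst.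
by case: (_ == _); rewrite ?subrK.
Qed.

Lemma unsubst_expK : cancel unsubst_exp (@subst_exp e).
Proof.
move=> P; apply/rowP => i; rewrite !mxE -/(tail_sum _) tail_sum_unsubst.
by case: (_ == _); rewrite ?addrK.
Qed.

Lemma subst_expB : GRing.zmod_morphism (@subst_exp e).
Proof.
move=> p q; apply/rowP => i; rewrite !mxE -!/(tail_sum _).
have -> : tail_sum (p - q) = tail_sum p - tail_sum q.
  by rewrite /tail_sum -sumrB; apply: eq_bigr => j _; rewrite !mxE.
by case: (_ == _) => //; ring.
Qed.

Lemma orthant_coneC_subst p : orthant e p <-> coneC e (subst_exp p).
Proof.
rewrite /coneC /orthant /= -/(tail_sum _) tail_sum_subst.
split=> [p_ge0 | [tail0 head0] i].
  split=> i i0; rewrite mxE.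
    by rewrite (negbTE i0); apply: p_ge0.
  rewrite ifT; last exact/eqP.
  by rewrite -{1}(sub0r (tail_sum p)) lerD2r.
have [i0|i0] := eqVneq (val i) 0%N.
  have := head0 i i0; rewrite mxE i0 eqxx.
  by rewrite -{1}(sub0r (tail_sum p)) lerD2r.
by have := tail0 i i0; rewrite mxE (negbTE i0).
Qed.

End Substitution.

Theorem mainTheorem17 (K : closedFieldType) (hK : [pchar K] =i pred0)
    (e : nat) (he : (0 < e)%N) (n : nat) (hn : (0 < n)%N) (f : ypoly K e) :
  @coeffs_in K e (orthant e) f -> monic_deg f n ->
  (@irreducible_over K e (coneC e) f n <->
   @irreducible_over K e (orthant e) (subst_first f) n).
Proof.
move=> _ _.
exact: irreducible_over_comp (@subst_expK e) (@unsubst_expK e) (@subst_expB e)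
  (@orthant_coneC_subst e).
Qed.
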